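(* Let $\kappa$ be an ordinal. Then $\mathbb C(\kappa)$ forces that there is no sequence $\langle f_\alpha:\alpha<(\mathfrak c^+)^V\rangle$ of elements of ${}^\omega\omega$ which is $\ll$-increasing, i.e. such that $f_\alpha\ll f_\beta$ whenever $\alpha<\beta<(\mathfrak c^+)^V$.
   Context: $\mathfrak c=2^{\aleph_0}$ computed in the ground model $V$. $C(\kappa)$ is the poset of finite partial functions from $\kappa$ to $\{0,1\}$ ordered by reverse extension, and $\mathbb C(\kappa)=RO(C(\kappa))$ is the Cohen algebra. For $f,g\in{}^\omega\omega$, $f\ll g$ means that $f(n)\le g(n)$ for all but finitely many $n\in\omega$ and $f(n)<g(n)$ for infinitely many $n\in\omega$. *)

(* Boolean-valued semantics of Cohen forcing C(kappa), with
   the Cohen algebra RO(C(kappa)) represented by regular open sets of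
   conditions. *)
From Stdlib Require Import List.

Section Cohen.
Variable K : Type.

Definition cond : Type :=
  { p : K -> option bool | exists s : list K, forall k, p k <> None -> In k s }.

Definition cle (q p : cond) : Prop :=
  forall k b, proj1_sig p k = Some b -> proj1_sig q k = Some b.

Definition cset := cond -> Prop.

(* regularization int(cl U) in the order topology *)
Definition reg (U : cset) : cset :=
  fun p => forall q, cle q p -> exists r, cle r q /\ U r.

Definition open_set (U : cset) : Prop := forall p q, U p -> cle q p -> U q.

Definition regular_open (U : cset) : Prop :=
  open_set U /\ forall p, reg U p -> U p.

Definition bmeet (U V : cset) : cset := fun p => U p /\ V p.
Definition bsup (U : nat -> cset) : cset := reg (fun p => exists i, U i p).
Definition binf (U : nat -> cset) : cset := fun p => forall i, U i p.
Definition bone : cset := fun _ => True.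

(* A (nice) C(K)-name for an element of ^omega omega:
   val n m is the Boolean value [[ f(n) = m ]]. *)
Record name := {
  val : nat -> nat -> cset;
  val_ro : forall n m, regular_open (val n m);
  val_disj : forall n m m' p, m <> m' -> val n m p -> val n m' p -> False;
  val_total : forall n p, bsup (val n) p
}.

Definition val_le (f g : name) (n : nat) : cset :=
  reg (fun p => exists m m', m <= m' /\ val f n m p /\ val g n m' p).
Definition val_lt (f g : name) (n : nat) : cset :=
  reg (fun p => exists m m', m < m' /\ val f n m p /\ val g n m' p).

(* [[ f << g ]] =
   [[ exists N, forall n >= N, f n <= g n ]] /\ [[ forall N, exists n >= N, f n < g n ]] *)
Definition val_ll (f g : name) : cset :=
  bmeet
    (bsup (fun N => binf (fun n => if Nat.leb N n then val_le f g n else bone)))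
    (binf (fun N => bsup (fun n => if Nat.leb N n then val_lt f g n else (fun _ => False)))).

End Cohen.

Arguments cle {K}.

Definition strict_well_order {W : Type} (lt : W -> W -> Prop) : Prop :=
  (forall x, ~ lt x x) /\
  (forall x y z, lt x y -> lt y z -> lt x z) /\
  (forall x y, lt x y \/ x = y \/ lt y x) /\
  well_founded lt.

Definition injective {A B : Type} (f : A -> B) : Prop :=
  forall x y, f x = f y -> x = y.

(* (W, lt) has order type (c^+), c = 2^aleph_0 computed in the ground model:
   every proper initial segment has size <= c, while W itself has size > c. *)
Definition is_c_plus {W : Type} (lt : W -> W -> Prop) : Prop :=
  strict_well_order lt /\
  (forall a : W, exists e : {b : W | lt b a} -> (nat -> bool), injective e) /\
  ~ (exists e : W -> (nat -> bool), injective e).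

From Stdlib Require Import List Arith Lia Classical ClassicalEpsilon
  FunctionalExtensionality ProofIrrelevance PropExtensionality Cantor.
Import ListNotations.

(* Every regular open subset of C(K) is determined by countably many coordinates
   (close off under witnesses of incompatibility), so each name F a has a countable
   support.  The type of F a relative to its support and to dom p takes only c
   values, and a Delta-system argument in the regular cardinal c^+ gives a < b of the
   same type whose supports, enumerated in parallel, meet only in a common root.
   The involution of K exchanging the two supports off the root fixes p and induces
   an automorphism of C(K) exchanging F a and F b, so p would force both F a << F b
   and F b << F a, which is impossible. *)

(** * Countable sets and sets of size at most c *)

Definition countable (X : Type) : Prop := exists f : X -> nat, injective f.

Lemma countable_nat : countable nat.
Proof. exists (fun n => n). intros x y; auto. Qed.

Lemma countable_bool : countable bool.
Proof. exists (fun b : bool => if b then 1 else 0). intros [] [] H; auto; discriminate. Qed.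

Lemma countable_prod X Y : countable X -> countable Y -> countable (X * Y).
Proof.
  intros [f Hf] [g Hg]. exists (fun xy => to_nat (f (fst xy), g (snd xy))).
  intros [x1 y1] [x2 y2] H. apply (f_equal of_nat) in H. rewrite !cancel_of_to in H.
  injection H as H1 H2. f_equal; [apply Hf | apply Hg]; assumption.
Qed.

Lemma countable_sum X Y : countable X -> countable Y -> countable (X + Y).
Proof.
  intros [f Hf] [g Hg].
  exists (fun z => match z with inl x => to_nat (0, f x) | inr y => to_nat (1, g y) end).
  intros [x1|y1] [x2|y2] H; apply (f_equal of_nat) in H; rewrite !cancel_of_to in H;
    injection H as H; try discriminate; f_equal; auto.
Qed.

Lemma countable_option X : countable X -> countable (option X).
Proof.
  intros [f Hf]. exists (fun o => match o with None => 0 | Some x => S (f x) end).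
  intros [x|] [y|] H; try discriminate; auto. injection H as H. f_equal; auto.
Qed.

Lemma countable_list X : countable X -> countable (list X).
Proof.
  intros [f Hf].
  exists (fix code l := match l with [] => 0 | x :: l' => S (to_nat (f x, code l')) end).
  intros l1; induction l1 as [|a l IH]; intros [|b l'] H; try discriminate; auto.
  cbn -[to_nat] in H. apply Nat.succ_inj in H.
  apply (f_equal of_nat) in H. rewrite !cancel_of_to in H.
  injection H as H1 H2. f_equal; auto.
Qed.

Lemma countable_decode X :
  countable X -> exists dec : nat -> option X, forall x, exists u, dec u = Some x.
Proof.
  intros [f Hf].
  destruct (choice (fun (u : nat) (o : option X) => forall x, f x = u -> o = Some x))
    as [dec Hdec].
  { intros u. destruct (classic (exists x, f x = u)) as [[x Hx]|Hn].
    - exists (Some x). intros x' Hx'. f_equal. apply Hf. congruence.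
    - exists None. intros x Hx. exfalso; eauto. }
  exists dec. intros x. exists (f x). apply Hdec. reflexivity.
Qed.

Definition le_continuum {X : Type} (P : X -> Prop) : Prop :=
  exists g : X -> nat -> bool, forall x y, P x -> P y -> g x = g y -> x = y.

Lemma le_continuum_sub {X} (P Q : X -> Prop) :
  le_continuum P -> (forall x, Q x -> P x) -> le_continuum Q.
Proof. intros [g Hg] HQP. exists g. auto. Qed.

Definition interleave (a b : nat -> bool) (n : nat) : bool :=
  if Nat.even n then a (Nat.div2 n) else b (Nat.div2 n).

Lemma interleave_inj a b a' b' : interleave a b = interleave a' b' -> a = a' /\ b = b'.
Proof.
  intros H. split; apply functional_extensionality; intros n.
  - assert (E := f_equal (fun h => h (2 * n)) H). unfold interleave in E. cbv beta in E.
    rewrite Nat.even_even, Nat.div2_double in E. exact E.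
  - assert (E := f_equal (fun h => h (2 * n + 1)) H). unfold interleave in E. cbv beta in E.
    rewrite Nat.even_odd, Nat.div2_odd' in E. exact E.
Qed.

Lemma le_continuum_fibres {X Y} (P : X -> Prop) (Q : Y -> Prop) (f : X -> Y) :
  (forall x, P x -> Q (f x)) -> le_continuum Q ->
  (forall y, Q y -> le_continuum (fun x => P x /\ f x = y)) -> le_continuum P.
Proof.
  intros HPQ [h Hh] Hfib.
  destruct (choice (fun y (g : X -> nat -> bool) => Q y ->
     forall x x', P x /\ f x = y -> P x' /\ f x' = y -> g x = g x' -> x = x')) as [G HG].
  { intros y. destruct (classic (Q y)) as [Hy|Hy].
    - destruct (Hfib y Hy) as [g Hg]. exists g. auto.
    - exists (fun _ _ => false). intros; contradiction. }
  exists (fun x => interleave (h (f x)) (G (f x) x)).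
  intros x x' Px Px' E. apply interleave_inj in E. destruct E as [E1 E2].
  apply Hh in E1; auto. rewrite <- E1 in E2.
  exact (HG (f x) (HPQ x Px) x x' (conj Px eq_refl) (conj Px' (eq_sym E1)) E2).
Qed.

Lemma le_continuum_prod A B :
  le_continuum (fun _ : A => True) -> le_continuum (fun _ : B => True) ->
  le_continuum (fun _ : A * B => True).
Proof.
  intros [g Hg] [h Hh]. exists (fun ab => interleave (g (fst ab)) (h (snd ab))).
  intros [a b] [a' b'] _ _ E. apply interleave_inj in E. destruct E as [E1 E2].
  f_equal; [apply Hg | apply Hh]; auto.
Qed.

Lemma le_continuum_pred_countable X :
  countable X -> le_continuum (fun _ : X -> Prop => True).
Proof.
  intros [f Hf].
  exists (fun P u =>
    if excluded_middle_informative (exists x, f x = u /\ P x) then true else false).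
  intros P P' _ _ E. apply functional_extensionality; intros x.
  apply propositional_extensionality.
  assert (Ex := f_equal (fun h => h (f x)) E). cbv beta in Ex.
  destruct (excluded_middle_informative (exists y, f y = f x /\ P y)) as [[y [Hy Py]]|N];
  destruct (excluded_middle_informative (exists y, f y = f x /\ P' y)) as [[y' [Hy' Py']]|N'];
    try discriminate.
  - apply Hf in Hy, Hy'. subst. tauto.
  - split; intros H; exfalso; eauto.
Qed.

Lemma le_continuum_range {Y} (e : nat -> Y) : le_continuum (fun y => exists j, e j = y).
Proof.
  exists (fun y n => if excluded_middle_informative (e n = y) then true else false).
  intros y y' [j Hj] _ E. assert (Ej := f_equal (fun h => h j) E). cbv beta in Ej.
  destruct (excluded_middle_informative (e j = y)),
           (excluded_middle_informative (e j = y')); congruence.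
Qed.

Lemma le_continuum_add {X} (P : X -> Prop) x0 :
  le_continuum P -> le_continuum (fun x => P x \/ x = x0).
Proof.
  intros [g Hg].
  exists (fun x n => match n with
                     | 0 => if excluded_middle_informative (x = x0) then true else false
                     | S n' => g x n' end).
  intros x y Hx Hy E. assert (E0 := f_equal (fun h => h 0) E). cbv beta in E0.
  destruct (excluded_middle_informative (x = x0)), (excluded_middle_informative (y = x0));
    try discriminate; try congruence.
  apply Hg; [destruct Hx; [auto|contradiction] | destruct Hy; [auto|contradiction] |].
  apply functional_extensionality; intros k. exact (f_equal (fun h => h (S k)) E).
Qed.
(** * Countable supports in C(K) *)

Section Support.
Variable K : Type.

Lemma cond_ext (p q : cond K) : (forall k, proj1_sig p k = proj1_sig q k) -> p = q.
Proof.
  destruct p as [f hf], q as [g hg]; simpl; intro H.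
  assert (f = g) by (apply functional_extensionality; auto). subst.
  f_equal. apply proof_irrelevance.
Qed.

Lemma cle_refl (p : cond K) : cle p p.
Proof. unfold cle; auto. Qed.

Lemma cle_trans (p q r : cond K) : cle p q -> cle q r -> cle p r.
Proof. unfold cle; auto. Qed.

Definition in_range (e : nat -> option K) (k : K) : Prop := exists i, e i = Some k.

Definition enum_inj (e : nat -> option K) : Prop :=
  forall i j k, e i = Some k -> e j = Some k -> i = j.

Definition dom_within (q : cond K) (e : nat -> option K) : Prop :=
  forall k, proj1_sig q k <> None -> in_range e k.

Definition restrict (e : nat -> option K) (q : cond K) : cond K.
Proof.
  refine (exist _ (fun k => if excluded_middle_informative (in_range e k)
                            then proj1_sig q k else None) _).
  destruct (proj2_sig q) as [s Hs]. exists s. intros k.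
  destruct (excluded_middle_informative _); [apply Hs | congruence].
Defined.

Lemma restrict_in e q k : in_range e k -> proj1_sig (restrict e q) k = proj1_sig q k.
Proof. simpl. destruct (excluded_middle_informative _); tauto. Qed.

Lemma restrict_out e q k : ~ in_range e k -> proj1_sig (restrict e q) k = None.
Proof. simpl. destruct (excluded_middle_informative _); tauto. Qed.

Lemma restrict_cle e q : cle q (restrict e q).
Proof.
  intros k b. destruct (classic (in_range e k)).
  - rewrite restrict_in; auto.
  - rewrite restrict_out; [discriminate | auto].
Qed.

Lemma dom_within_restrict e q : dom_within (restrict e q) e.
Proof.
  intros k Hk. apply NNPP. intros Hn. apply Hk, restrict_out, Hn.
Qed.

Definition cond_union (r q : cond K) : cond K.
Proof.
  refine (exist _ (fun k => match proj1_sig r k with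
                            | Some b => Some b
                            | None => proj1_sig q k end) _).
  destruct (proj2_sig r) as [s1 H1], (proj2_sig q) as [s2 H2].
  exists (s1 ++ s2). intros k Hk. apply in_or_app.
  destruct (proj1_sig r k) eqn:E; [left; apply H1 | right; apply H2]; congruence.
Defined.

Lemma cond_union_cle_l r q : cle (cond_union r q) r.
Proof. intros k b Hk. simpl. rewrite Hk. reflexivity. Qed.

Lemma cond_union_cle_r e r q :
  cle r (restrict e q) -> dom_within r e -> cle (cond_union r q) q.
Proof.
  intros Hr Hdom k b Hq. simpl. destruct (proj1_sig r k) as [b'|] eqn:E; [|exact Hq].
  rewrite <- E. apply Hr. rewrite restrict_in; [exact Hq|]. apply Hdom. congruence.
Qed.

Definition exterior (U : cset K) (r : cond K) : Prop := forall r', cle r' r -> ~ U r'.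

Lemma not_reg_exterior (U : cset K) p : ~ reg K U p -> exists q, cle q p /\ exterior U q.
Proof.
  intros H. apply not_all_ex_not in H. destruct H as [q Hq].
  apply imply_to_and in Hq. destruct Hq as [Hqp Hq].
  exists q. split; auto. intros r Hr HU. apply Hq. eauto.
Qed.

Definition reflects_exterior (U : cset K) (e : nat -> option K) : Prop :=
  forall s, dom_within s e -> (exists r, cle r s /\ exterior U r) ->
  exists r, cle r s /\ exterior U r /\ dom_within r e.

Lemma regular_open_restrict (U : cset K) e :
  regular_open K U -> reflects_exterior U e -> forall q, U q <-> U (restrict e q).
Proof.
  intros [Hopen Hreg] Hrefl q. split; [|intros HU; exact (Hopen _ q HU (restrict_cle e q))].
  intros HU. apply NNPP. intros Hn.
  destruct (not_reg_exterior U (restrict e q)) as [q' [Hq' Hext]]; [intro; apply Hn, Hreg; auto|].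
  destruct (Hrefl (restrict e q)) as [r [Hr [Hrext Hdom]]];
    [apply dom_within_restrict | exists q'; auto |].
  apply (Hrext (cond_union r q)); [apply cond_union_cle_l|].
  apply (Hopen q); [exact HU | exact (cond_union_cle_r e r q Hr Hdom)].
Qed.

Lemma enumerate_union {X} (g : X -> nat -> option K) :
  countable X -> exists e, forall k, in_range e k <-> exists x, in_range (g x) k.
Proof.
  intros HX. destruct (countable_decode X HX) as [dec Hdec].
  exists (fun j => match dec (fst (of_nat j)) with
                   | Some x => g x (snd (of_nat j)) | None => None end).
  intros k; split.
  - intros [j Hj]. destruct (dec (fst (of_nat j))) as [x|]; [|discriminate].
    exists x, (snd (of_nat j)). exact Hj.
  - intros [x [i Hi]]. destruct (Hdec x) as [u Hu]. exists (to_nat (u, i)).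
    rewrite cancel_of_to. simpl. rewrite Hu. exact Hi.
Qed.

Lemma enumerate_injectively e : exists e', enum_inj e' /\ forall k, in_range e' k <-> in_range e k.
Proof.
  exists (fun i =>
    if excluded_middle_informative (exists j, j < i /\ e j = e i) then None else e i).
  split.
  - intros i j k Hi Hj.
    destruct (excluded_middle_informative (exists j', j' < i /\ e j' = e i)) as [_|Ni];
      [discriminate|].
    destruct (excluded_middle_informative (exists j', j' < j /\ e j' = e j)) as [_|Nj];
      [discriminate|].
    destruct (lt_eq_lt_dec i j) as [[H|H]|H]; auto; exfalso;
      [apply Nj; exists i | apply Ni; exists j]; split; congruence.
  - intros k; split.
    + intros [i Hi]. destruct (excluded_middle_informative _); [discriminate|]. exists i; exact Hi.
    + intros [i Hi]. revert Hi. induction i as [i IH] using lt_wf_ind. intros Hi.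
      destruct (classic (exists j, j < i /\ e j = e i)) as [[j [Hj Hje]]|Hn].
      * apply (IH j Hj). congruence.
      * exists i. destruct (excluded_middle_informative _); [contradiction | exact Hi].
Qed.

Lemma dom_within_enumeration (P : cond K -> Prop) :
  exists E, (exists r, P r) -> exists r, P r /\ dom_within r E.
Proof.
  destruct (classic (exists r, P r)) as [[r Hr]|Hn].
  - destruct (proj2_sig r) as [ls Hls]. exists (nth_error ls).
    intros _. exists r. split; auto. intros k Hk.
    apply In_nth_error, Hls, Hk.
  - exists (fun _ => None). intros H; contradiction.
Qed.

Definition follows (e : nat -> option K) (l : list (nat * bool)) (r : cond K) : Prop :=
  forall i b k, In (i, b) l -> e i = Some k -> proj1_sig r k = Some b.

Lemma extensions_follow e s :
  dom_within s e -> exists l, forall r, cle r s <-> follows e l r.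
Proof.
  intros Hd. destruct (proj2_sig s) as [ls Hls].
  assert (H : forall ls0, exists l,
    (forall i b, In (i, b) l -> exists k, e i = Some k /\ proj1_sig s k = Some b) /\
    (forall k b, In k ls0 -> proj1_sig s k = Some b -> exists i, In (i, b) l /\ e i = Some k)).
  { induction ls0 as [|k ls0 [l [H1 H2]]].
    - exists []. split; intros ? ? [].
    - destruct (proj1_sig s k) as [b|] eqn:E.
      + destruct (Hd k) as [i Hi]; [congruence|].
        exists ((i, b) :: l). split.
        * intros i' b' [Heq|Hin]; [injection Heq as -> ->; eauto | eauto].
        * intros k' b' [<-|Hk] Hs; [exists i; split; [left; congruence | auto]|].
          destruct (H2 k' b' Hk Hs) as [i' [? ?]]. exists i'; split; [right|]; auto.
      + exists l. split; auto. intros k' b' [<-|Hk] Hs; [congruence | eauto]. }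
  destruct (H ls) as [l [H1 H2]]. exists l. intros r. split.
  - intros Hr i b k Hin Hi. destruct (H1 i b Hin) as [k' [Hk' Hs]].
    rewrite Hi in Hk'. injection Hk' as <-. apply Hr, Hs.
  - intros Hr k b Hs. destruct (H2 k b) as [i [Hin Hi]];
      [apply Hls; congruence | exact Hs | exact (Hr i b k Hin Hi)].
Qed.

Lemma dom_within_stage (stage : nat -> nat -> option K) s :
  (forall t k, in_range (stage t) k -> in_range (stage (S t)) k) ->
  (forall k, proj1_sig s k <> None -> exists t, in_range (stage t) k) ->
  exists T, dom_within s (stage T).
Proof.
  intros Hstep Hd.
  assert (Hmono : forall t t' k, t <= t' -> in_range (stage t) k -> in_range (stage t') k)
    by (intros t t' k Ht; induction Ht; auto).
  destruct (proj2_sig s) as [ls Hls].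
  enough (H : forall ls0, exists T,
             forall k, In k ls0 -> proj1_sig s k <> None -> in_range (stage T) k)
    by (destruct (H ls) as [T HT]; exists T; intros k Hk; apply HT; auto).
  induction ls0 as [|k ls0 [T HT]]; [exists 0; intros ? []|].
  destruct (classic (proj1_sig s k <> None)) as [Hk|Hk].
  - destruct (Hd k Hk) as [t Ht]. exists (max t T).
    intros k' [<-|Hin] Hk'; [apply (Hmono t) | apply (Hmono T)]; auto; lia.
  - exists T. intros k' [<-|Hin] Hk'; [contradiction | auto].
Qed.

Section ClosingOff.
Variables (X : Type) (U : X -> cset K).
Hypothesis X_countable : countable X.

Lemma reflecting_extension e : exists e',
  (forall k, in_range e k -> in_range e' k) /\
  forall x s, dom_within s e -> (exists r, cle r s /\ exterior (U x) r) ->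
  exists r, cle r s /\ exterior (U x) r /\ dom_within r e'.
Proof.
  destruct (choice (fun (xl : X * list (nat * bool)) E =>
      (exists r, follows e (snd xl) r /\ exterior (U (fst xl)) r) ->
      exists r, (follows e (snd xl) r /\ exterior (U (fst xl)) r) /\ dom_within r E))
    as [G HG].
  { intros xl. apply dom_within_enumeration. }
  destruct (enumerate_union (fun o => match o with Some xl => G xl | None => e end))
    as [e' He'].
  { apply countable_option, countable_prod, countable_list, countable_prod;
      auto using countable_nat, countable_bool. }
  exists e'. split.
  - intros k Hk. apply He'. exists None. exact Hk.
  - intros x s Hd [r0 [Hr0 Hext0]].
    destruct (extensions_follow e s Hd) as [l Hl].
    destruct (HG (x, l)) as [r [[Hf Hext] Hdom]]; [exists r0; split; [apply Hl|]; auto|].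
    exists r. split; [apply Hl; exact Hf|]. split; [exact Hext|].
    intros k Hk. apply He'. exists (Some (x, l)). exact (Hdom k Hk).
Qed.

Lemma reflecting_enumeration : exists e, forall x, reflects_exterior (U x) e.
Proof.
  destruct (choice _ reflecting_extension) as [step Hstep].
  pose (stage := fun t => Nat.iter t step (fun _ => None)).
  destruct (enumerate_union stage countable_nat) as [e He].
  exists e. intros x s Hd Hex.
  destruct (dom_within_stage stage s) as [T HT].
  - intros t. apply (proj1 (Hstep (stage t))).
  - intros k Hk. apply He, Hd, Hk.
  - destruct (proj2 (Hstep (stage T)) x s HT Hex) as [r [Hr [Hext Hdom]]].
    exists r. split; [exact Hr|]. split; [exact Hext|].
    intros k Hk. apply He. exists (S T). exact (Hdom k Hk).
Qed.

Theorem countable_support :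
  (forall x, regular_open K (U x)) ->
  exists e, enum_inj e /\ forall x q, U x q <-> U x (restrict e q).
Proof.
  intros HU. destruct reflecting_enumeration as [e0 He0].
  destruct (enumerate_injectively e0) as [e [Hinj Hrange]].
  exists e. split; [exact Hinj|]. intros x. apply regular_open_restrict; [apply HU|].
  intros s Hd Hex. destruct (He0 x s) as [r [Hr [Hext Hdom]]].
  - intros k Hk. apply Hrange, Hd, Hk.
  - exact Hex.
  - exists r. split; [exact Hr|]. split; [exact Hext|]. intros k Hk. apply Hrange, Hdom, Hk.
Qed.

End ClosingOff.

Lemma name_support (f : name K) :
  exists e, enum_inj e /\ forall n m q, val K f n m q <-> val K f n m (restrict e q).
Proof.
  destruct (countable_support (nat * nat) (fun nm => val K f (fst nm) (snd nm))
              (countable_prod _ _ countable_nat countable_nat))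
    as [e [Hinj He]].
  { intros [n m]. apply val_ro. }
  exists e. split; [exact Hinj|]. intros n m. exact (He (n, m)).
Qed.

End Support.

(** * Delta systems below c^+ *)

Section CPlus.
Variables (W : Type) (lt : W -> W -> Prop).
Hypothesis HW : is_c_plus lt.

Definition wle (x y : W) : Prop := lt x y \/ x = y.

Lemma wlt_irrefl x : ~ lt x x.
Proof. apply HW. Qed.

Lemma wlt_trans x y z : lt x y -> lt y z -> lt x z.
Proof. apply HW. Qed.

Lemma wlt_trichotomy x y : lt x y \/ x = y \/ lt y x.
Proof. apply HW. Qed.

Lemma not_wlt_wle x y : ~ lt x y -> wle y x.
Proof.
  intros H. destruct (wlt_trichotomy x y) as [?|[?|?]]; [contradiction | right | left]; auto.
Qed.

Lemma wlt_wle_trans x y z : lt x y -> wle y z -> lt x z.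
Proof. intros H [H'|<-]; [eapply wlt_trans|]; eauto. Qed.

Lemma wle_wlt_trans x y z : wle x y -> lt y z -> lt x z.
Proof. intros [H|<-] H'; [eapply wlt_trans|]; eauto. Qed.

Lemma wle_trans x y z : wle x y -> wle y z -> wle x z.
Proof. intros [H|<-] H'; [left; eapply wlt_wle_trans|]; eauto. Qed.

Definition is_least (P : W -> Prop) (w : W) : Prop := P w /\ forall w', P w' -> ~ lt w' w.

Lemma least_exists (P : W -> Prop) : (exists w, P w) -> exists w, is_least P w.
Proof.
  intros [w Hw]. revert Hw.
  induction w as [w IH] using (well_founded_ind (proj2 (proj2 (proj2 (proj1 HW))))).
  intros Hw. destruct (classic (exists w', P w' /\ lt w' w)) as [[w' [H1 H2]]|Hn].
  - exact (IH w' H2 H1).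
  - exists w. split; auto. intros w' H1 H2. eauto.
Qed.

Lemma least_unique (P : W -> Prop) w1 w2 : is_least P w1 -> is_least P w2 -> w1 = w2.
Proof.
  intros [H1 M1] [H2 M2].
  destruct (wlt_trichotomy w1 w2) as [H|[H|H]]; [exfalso; exact (M2 w1 H1 H) | exact H |].
  exfalso; exact (M1 w2 H2 H).
Qed.

Lemma not_le_continuum_W : ~ le_continuum (fun _ : W => True).
Proof.
  destruct HW as [_ [_ Hn]]. intros [g Hg]. apply Hn. exists g. intros x y. apply Hg; auto.
Qed.

Lemma le_continuum_wlt a : le_continuum (fun b => lt b a).
Proof.
  destruct HW as [_ [Hs _]]. destruct (Hs a) as [e He].
  exists (fun b => match excluded_middle_informative (lt b a) with
                   | left h => e (exist _ b h) | right _ => fun _ => false end).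
  intros x y Hx Hy E.
  destruct (excluded_middle_informative (lt x a)) as [hx|]; [|contradiction].
  destruct (excluded_middle_informative (lt y a)) as [hy|]; [|contradiction].
  apply He in E. exact (f_equal (@proj1_sig _ _) E).
Qed.

Lemma le_continuum_wle b : le_continuum (fun w => wle w b).
Proof. apply le_continuum_add, le_continuum_wlt. Qed.

(* The regularity of c^+. *)
Lemma le_continuum_bounded (P : W -> Prop) : le_continuum P -> exists g, forall x, P x -> wle x g.
Proof.
  intros Hs. apply NNPP. intros Hn.
  destruct (choice (fun g x => P x /\ lt g x)) as [above Habove].
  { intros g. apply NNPP. intros Hx. apply Hn. exists g. intros x Px.
    apply not_wlt_wle. intros Hl. apply Hx. eauto. }
  apply not_le_continuum_W, (le_continuum_fibres _ P above).
  - intros x _. apply Habove.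
  - exact Hs.
  - intros y _. apply (le_continuum_sub _ _ (le_continuum_wlt y)).
    intros x [_ <-]. apply Habove.
Qed.

Lemma large_fibre T (f : W -> T) :
  le_continuum (fun _ : T => True) -> exists t, ~ le_continuum (fun a => f a = t).
Proof.
  intros HT. apply NNPP. intros Hn.
  apply not_le_continuum_W, (le_continuum_fibres _ (fun _ => True) f); auto.
  intros t _. apply (le_continuum_sub (fun a => f a = t)); [|tauto].
  apply NNPP. intros Ht. eauto.
Qed.

Section DeltaSystem.
Variables (Y : Type) (e : W -> nat -> Y).

Definition occurs (y : Y) (w : W) : Prop := exists j, e w j = y.

Definition rank (a : W) (i : nat) : W := epsilon (inhabits a) (is_least (occurs (e a i))).

Lemma rank_least a i : is_least (occurs (e a i)) (rank a i).
Proof. unfold rank. apply epsilon_spec, least_exists. exists a, i. reflexivity. Qed.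

Lemma rank_eq a i b j : e a i = e b j -> rank a i = rank b j.
Proof.
  intros E. apply (least_unique (occurs (e a i))); [apply rank_least|].
  rewrite E. apply rank_least.
Qed.

Lemma rank_wle a i : wle (rank a i) a.
Proof. apply not_wlt_wle, (proj2 (rank_least a i)). exists i. reflexivity. Qed.

Section LargeClass.
Variable C : W -> Prop.
Hypothesis C_large : ~ le_continuum C.
Hypothesis C_rank_order : forall a b i j, C a -> C b ->
  lt (rank a i) (rank a j) -> lt (rank b i) (rank b j).

Lemma C_inhabited : exists c, C c.
Proof.
  apply NNPP. intros Hn. apply C_large. exists (fun _ _ => false).
  intros x y Hx. exfalso; eauto.
Qed.

Lemma C_unbounded g : exists c, C c /\ lt g c.
Proof.
  apply NNPP. intros Hn. apply C_large, (le_continuum_sub _ _ (le_continuum_wle g)).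
  intros c Hc. apply not_wlt_wle. eauto.
Qed.

Definition root (i : nat) : Prop := exists g, forall c, C c -> wle (rank c i) g.

Lemma root_bound : exists g, forall i c, root i -> C c -> wle (rank c i) g.
Proof.
  destruct C_inhabited as [c0 _].
  destruct (choice (fun i g => root i -> forall c, C c -> wle (rank c i) g)) as [bound Hbound].
  { intros i. destruct (classic (root i)) as [[g Hg]|Hn]; [exists g | exists c0]; tauto. }
  destruct (le_continuum_bounded _ (le_continuum_range bound)) as [g Hg].
  exists g. intros i c Hi Hc. apply (wle_trans _ (bound i)); [apply Hbound; auto|].
  apply Hg. exists i. reflexivity.
Qed.

Lemma le_continuum_occurs_below g : le_continuum (fun y => exists w, wle w g /\ occurs y w).
Proof.
  apply (le_continuum_fibres _ (fun w => wle w g)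
           (fun y => epsilon (inhabits g) (fun w => wle w g /\ occurs y w))).
  - intros y Hy. apply (epsilon_spec _ _ Hy).
  - apply le_continuum_wle.
  - intros w _. apply (le_continuum_sub _ _ (le_continuum_range (e w))).
    intros y [Hy <-]. apply (epsilon_spec _ _ Hy).
Qed.

Lemma root_coding : exists phi : W -> nat * nat -> Prop,
  forall a b, C a -> C b -> phi a = phi b -> forall i, root i -> e a i = e b i.
Proof.
  destruct root_bound as [g Hg].
  destruct (le_continuum_occurs_below g) as [code Hcode].
  exists (fun c ij => root (fst ij) /\ code (e c (fst ij)) (snd ij) = true).
  intros a b Ha Hb E i Hi. apply Hcode.
  - exists (rank a i). split; [apply Hg; auto | apply rank_least].
  - exists (rank b i). split; [apply Hg; auto | apply rank_least].
  - apply functional_extensionality. intros n. apply Bool.eq_iff_eq_true.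
    assert (En := f_equal (fun h => h (i, n)) E). simpl in En.
    assert (Hiff : root i /\ code (e a i) n = true <-> root i /\ code (e b i) n = true)
      by (rewrite En; tauto).
    tauto.
Qed.

Lemma exists_above g : exists c, C c /\ lt g c /\ forall j, ~ root j -> lt g (rank c j).
Proof.
  destruct (classic (exists j, ~ root j)) as [[j1 Hj1]|Hall].
  - destruct C_inhabited as [a0 Ha0].
    destruct (least_exists (fun w => exists j, ~ root j /\ rank a0 j = w))
      as [w0 [[j0 [Hj0 <-]] Hmin]]; [eauto|].
    (* by [C_rank_order], [j0] has the least rank among non-root indices along all of [C] *)
    assert (Hfirst : forall c j, C c -> ~ root j -> wle (rank c j0) (rank c j)).
    { intros c j Hc Hj. apply not_wlt_wle. intros Hl.
      apply (Hmin (rank a0 j)); [eauto|]. exact (C_rank_order c a0 j j0 Hc Ha0 Hl). }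
    assert (Hc : exists c, C c /\ lt g (rank c j0)).
    { apply NNPP. intros Hn. apply Hj0. exists g. intros c Hc. apply not_wlt_wle. eauto. }
    destruct Hc as [c [Hc Hgc]]. exists c. split; [exact Hc|]. split.
    + exact (wlt_wle_trans _ _ _ Hgc (rank_wle c j0)).
    + intros j Hj. exact (wlt_wle_trans _ _ _ Hgc (Hfirst c j Hc Hj)).
  - destruct (C_unbounded g) as [c [Hc Hgc]].
    exists c. split; [exact Hc|]. split; [exact Hgc|]. intros j Hj. exfalso; eauto.
Qed.

Lemma aligned_pair : exists a b, C a /\ C b /\ lt a b /\
  forall i j, e a i = e b j -> e a j = e b j.
Proof.
  destruct root_coding as [phi Hphi].
  pose (M := fun m => C m /\ forall m', C m' -> phi m' = phi m -> ~ lt m' m).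
  (* the least representatives of the root codes are at most c many, hence bounded *)
  assert (HM : le_continuum M).
  { destruct (le_continuum_pred_countable (nat * nat)) as [code Hcode];
      [apply countable_prod; apply countable_nat|].
    exists (fun m => code (phi m)). intros x y [Cx Mx] [Cy My] E. apply Hcode in E; auto.
    destruct (wlt_trichotomy x y) as [H|[H|H]];
      [exfalso; exact (My x Cx E H) | exact H | exfalso; exact (Mx y Cy (eq_sym E) H)]. }
  destruct (le_continuum_bounded M HM) as [g Hg].
  destruct (exists_above g) as [b [Hb [Hgb Hgroot]]].
  destruct (least_exists (fun m => C m /\ phi m = phi b)) as [a [[Ha Ea] Hmin]]; [eauto|].
  assert (Hag : wle a g).
  { apply Hg. split; [exact Ha|]. intros m' Hm' E'. apply Hmin. split; congruence. }
  exists a, b. split; [exact Ha|]. split; [exact Hb|].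
  split; [exact (wle_wlt_trans _ _ _ Hag Hgb)|].
  intros i j Eij. destruct (classic (root j)) as [Hj|Hj]; [exact (Hphi a b Ha Hb Ea j Hj)|].
  exfalso.
  assert (Hlt : lt (rank a i) (rank b j)).
  { apply (wle_wlt_trans _ a); [apply rank_wle|]. apply (wle_wlt_trans _ g); auto. }
  rewrite (rank_eq a i b j Eij) in Hlt. exact (wlt_irrefl _ Hlt).
Qed.

End LargeClass.

Theorem delta_system T (tp : W -> T) : le_continuum (fun _ : T => True) ->
  exists a b, lt a b /\ tp a = tp b /\ forall i j, e a i = e b j -> e a j = e b j.
Proof.
  intros HT.
  pose (full := fun a => (tp a, fun ij : nat * nat => lt (rank a (fst ij)) (rank a (snd ij)))).
  destruct (large_fibre _ full) as [t Ht].
  { apply le_continuum_prod; [exact HT|].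
    apply le_continuum_pred_countable, countable_prod; apply countable_nat. }
  destruct (aligned_pair (fun a => full a = t) Ht) as [a [b [Ha [Hb [Hab Hal]]]]].
  { intros a b i j Ha Hb Hl.
    assert (E := f_equal (fun x => snd x (i, j)) (eq_trans Ha (eq_sym Hb))).
    simpl in E. rewrite <- E. exact Hl. }
  exists a, b. split; [exact Hab|]. split; [|exact Hal].
  exact (f_equal fst (eq_trans Ha (eq_sym Hb))).
Qed.

End DeltaSystem.
End CPlus.

(** * Automorphisms of C(K) *)

Section Swap.
Variables (K : Type) (ea eb : nat -> option K).
Hypotheses (ea_inj : enum_inj K ea) (eb_inj : enum_inj K eb).
Hypothesis aligned : forall i j, ea i = eb j -> ea j = eb j.
Hypothesis none_iff : forall j, ea j = None <-> eb j = None.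

Definition swap_rel (k y : K) : Prop :=
  (exists j, ea j = Some k /\ eb j = Some y) \/
  (exists j, eb j = Some k /\ ea j = Some y) \/
  (y = k /\ ~ in_range K ea k /\ ~ in_range K eb k).

Lemma swap_rel_total k : exists y, swap_rel k y.
Proof.
  destruct (classic (in_range K ea k)) as [[j Hj]|Ha].
  - destruct (eb j) as [y|] eqn:E; [|apply none_iff in E; congruence].
    exists y. left. eauto.
  - destruct (classic (in_range K eb k)) as [[j Hj]|Hb].
    + destruct (ea j) as [y|] eqn:E; [|apply none_iff in E; congruence].
      exists y. right; left. eauto.
    + exists k. right; right. auto.
Qed.

Lemma swap_rel_crossed j1 j2 k y y' :
  ea j1 = Some k -> eb j1 = Some y -> eb j2 = Some k -> ea j2 = Some y' -> y = k /\ y' = k.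
Proof.
  intros Ha1 Hb1 Hb2 Ha2.
  assert (Ea2 : ea j2 = Some k) by (rewrite (aligned j1 j2); congruence).
  rewrite (ea_inj j1 j2 k Ha1 Ea2) in Hb1. split; congruence.
Qed.

Lemma swap_rel_functional k y y' : swap_rel k y -> swap_rel k y' -> y = y'.
Proof.
  intros [[j [Ha Hb]]|[[j [Hb Ha]]|[-> [Na Nb]]]] [[j' [Ha' Hb']]|[[j' [Hb' Ha']]|[-> [Na' Nb']]]].
  all: try (exfalso; unfold in_range in *; eauto; fail).
  - rewrite (ea_inj j j' k Ha Ha') in Hb. congruence.
  - destruct (swap_rel_crossed j j' k y y' Ha Hb Hb' Ha'). congruence.
  - destruct (swap_rel_crossed j' j k y' y Ha' Hb' Hb Ha). congruence.
  - rewrite (eb_inj j j' k Hb Hb') in Ha. congruence.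
  - reflexivity.
Qed.

Lemma swap_rel_sym k y : swap_rel k y -> swap_rel y k.
Proof.
  intros [[j [Ha Hb]]|[[j [Hb Ha]]|[-> [Na Nb]]]].
  - right; left. eauto.
  - left. eauto.
  - right; right. auto.
Qed.

Definition swap (k : K) : K := epsilon (inhabits k) (swap_rel k).

Lemma swap_eq k y : swap_rel k y -> swap k = y.
Proof.
  intros H. apply (swap_rel_functional k); [|exact H]. unfold swap.
  apply epsilon_spec, swap_rel_total.
Qed.

Lemma swap_invol k : swap (swap k) = k.
Proof. apply swap_eq, swap_rel_sym. unfold swap. apply epsilon_spec, swap_rel_total. Qed.

Lemma swap_enum i : eb i = option_map swap (ea i).
Proof.
  destruct (ea i) as [x|] eqn:Ea; [|apply none_iff, Ea].
  destruct (eb i) as [y|] eqn:Eb; [|apply none_iff in Eb; congruence].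
  simpl. f_equal. symmetry. apply swap_eq. left. eauto.
Qed.

Lemma swap_fixed k : (forall j, ea j = Some k <-> eb j = Some k) -> swap k = k.
Proof.
  intros H. apply swap_eq.
  destruct (classic (in_range K ea k)) as [[j Hj]|Ha]; [left; exists j; split; [|apply H]; auto|].
  destruct (classic (in_range K eb k)) as [[j Hj]|Hb]; [left; exists j; split; [apply H|]; auto|].
  right; right. auto.
Qed.

End Swap.

Section Automorphism.
Variables (K : Type) (pi : K -> K).
Hypothesis pi_invol : forall k, pi (pi k) = k.

Definition act (q : cond K) : cond K.
Proof.
  refine (exist _ (fun k => proj1_sig q (pi k)) _).
  destruct (proj2_sig q) as [ls Hls]. exists (map pi ls).
  intros k Hk. rewrite <- (pi_invol k). apply in_map. auto.
Defined.

Lemma act_invol q : act (act q) = q.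
Proof. apply cond_ext. intros k. simpl. rewrite pi_invol. reflexivity. Qed.

Lemma act_cle q q' : cle q' q -> cle (act q') (act q).
Proof. intros H k b. simpl. auto. Qed.

Lemma act_fixed p : (forall k, proj1_sig p k <> None -> pi k = k) -> act p = p.
Proof.
  intros Hfix. apply cond_ext. intros k. simpl.
  destruct (classic (proj1_sig p k = None)) as [E|E]; [|rewrite Hfix; auto].
  destruct (classic (proj1_sig p (pi k) = None)) as [E'|E']; [congruence|].
  exfalso. rewrite <- (pi_invol k), (Hfix (pi k) E') in E. contradiction.
Qed.

Definition transports (U V : cset K) : Prop := forall q, U q <-> V (act q).

Lemma transports_sym U V : transports U V -> transports V U.
Proof. intros H q. rewrite (H (act q)), act_invol. reflexivity. Qed.

Lemma transports_reg U V : transports U V -> transports (reg K U) (reg K V).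
Proof.
  intros H q. split.
  - intros HU q' Hq'. destruct (HU (act q')) as [r [Hr Ur]].
    { rewrite <- (act_invol q). apply act_cle; auto. }
    exists (act r). split; [rewrite <- (act_invol q'); apply act_cle; auto | apply H; auto].
  - intros HV q' Hq'. destruct (HV (act q')) as [r [Hr Vr]]; [apply act_cle; auto|].
    exists (act r). split; [rewrite <- (act_invol q'); apply act_cle; auto|].
    apply H. rewrite act_invol. exact Vr.
Qed.

Lemma transports_bsup (U V : nat -> cset K) :
  (forall i, transports (U i) (V i)) -> transports (bsup K U) (bsup K V).
Proof.
  intros H. apply transports_reg. intros q. split; intros [i Hi]; exists i; apply H; auto.
Qed.

Lemma transports_binf (U V : nat -> cset K) :
  (forall i, transports (U i) (V i)) -> transports (binf K U) (binf K V).
Proof. intros H q. split; intros Hi i; apply H; auto. Qed.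

Lemma transports_bmeet U U' V V' :
  transports U V -> transports U' V' -> transports (bmeet K U U') (bmeet K V V').
Proof. intros H H' q. unfold bmeet. rewrite (H q), (H' q). reflexivity. Qed.

Section Names.
Variables f g f' g' : name K.
Hypothesis Hf : forall n m, transports (val K f n m) (val K f' n m).
Hypothesis Hg : forall n m, transports (val K g n m) (val K g' n m).

Lemma transports_compare (R : nat -> nat -> Prop) n :
  transports (reg K (fun p => exists m m', R m m' /\ val K f n m p /\ val K g n m' p))
             (reg K (fun p => exists m m', R m m' /\ val K f' n m p /\ val K g' n m' p)).
Proof.
  apply transports_reg. intros q.
  split; intros [m [m' [HR [Hfm Hgm']]]]; exists m, m'; rewrite (Hf n m q), (Hg n m' q) in *; auto.
Qed.

Lemma transports_val_ll : transports (val_ll K f g) (val_ll K f' g').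
Proof.
  apply transports_bmeet.
  - apply transports_bsup. intros N. apply transports_binf. intros n.
    destruct (Nat.leb N n); [apply transports_compare | intros q; reflexivity].
  - apply transports_binf. intros N. apply transports_bsup. intros n.
    destruct (Nat.leb N n); [apply transports_compare | intros q; reflexivity].
Qed.

End Names.
End Automorphism.

Lemma reg_witness K (U : cset K) p : reg K U p -> exists q, cle q p /\ U q.
Proof. intros H. destruct (H p (cle_refl K p)) as [r [Hr HU]]. eauto. Qed.

Lemma val_ll_asym K (f g : name K) p : val_ll K f g p -> val_ll K g f p -> False.
Proof.
  intros [_ Hlt] [Hle _].
  destruct (reg_witness _ _ _ Hle) as [q1 [Hq1 [N HN]]].
  destruct (Hlt N q1 Hq1) as [q2 [Hq2 [n Hn]]].
  specialize (HN n). cbv beta in HN, Hn. destruct (Nat.leb N n); [|contradiction].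
  destruct (reg_witness _ _ _ Hn) as [q3 [Hq3 [m [m' [Hmm' [Hf Hg]]]]]].
  destruct (HN q3 (cle_trans _ _ _ _ Hq3 Hq2)) as [q4 [Hq4 [m2 [m2' [Hm2 [Hg2 Hf2]]]]]].
  assert (Hf4 : val K f n m q4) by (apply (proj1 (val_ro K f n m)) with q3; auto).
  assert (Hg4 : val K g n m' q4) by (apply (proj1 (val_ro K g n m')) with q3; auto).
  assert (m = m2') by (apply NNPP; intro; eapply (val_disj K f n m m2' q4); eauto).
  assert (m' = m2) by (apply NNPP; intro; eapply (val_disj K g n m' m2 q4); eauto).
  lia.
Qed.

Section Readings.
Variable K : Type.

Definition agrees (e : nat -> option K) (s : list (option bool)) (q : cond K) : Prop :=
  forall i k, e i = Some k -> proj1_sig q k = nth i s None.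

Definition reads_as (e : nat -> option K) (s : list (option bool)) (q : cond K) : Prop :=
  agrees e s q /\ dom_within K q e.

Lemma reads_as_unique e s q1 q2 : reads_as e s q1 -> reads_as e s q2 -> q1 = q2.
Proof.
  intros [A1 D1] [A2 D2]. apply cond_ext. intros k.
  destruct (classic (in_range K e k)) as [[i Hi]|Hn]; [rewrite (A1 _ _ Hi), (A2 _ _ Hi); auto|].
  destruct (proj1_sig q1 k) eqn:E1; [exfalso; apply Hn, D1; congruence|].
  destruct (proj1_sig q2 k) eqn:E2; [exfalso; apply Hn, D2; congruence|]. reflexivity.
Qed.

Lemma reads_as_restrict e s q : agrees e s q -> reads_as e s (restrict K e q).
Proof.
  intros H. split; [|apply dom_within_restrict].
  intros i k Hi. rewrite restrict_in; [apply H, Hi | exists i; exact Hi].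
Qed.

Lemma enum_bound e (L : list K) : enum_inj K e ->
  exists N, forall i k, e i = Some k -> In k L -> i < N.
Proof.
  intros Hinj. induction L as [|k L [N HN]]; [exists 0; intros ? ? ? []|].
  destruct (classic (in_range K e k)) as [[i0 Hi0]|Hn].
  - exists (max N (S i0)). intros i k' Hi [<-|Hin].
    + rewrite (Hinj i i0 k Hi Hi0). lia.
    + specialize (HN i k' Hi Hin). lia.
  - exists N. intros i k' Hi [<-|Hin]; [exfalso; apply Hn; exists i; exact Hi | eauto].
Qed.

Lemma agrees_exists e q : enum_inj K e -> exists s, agrees e s q.
Proof.
  intros Hinj. destruct (proj2_sig q) as [L HL].
  destruct (enum_bound e L Hinj) as [N HN].
  pose (trace := fun i => match e i with Some k => proj1_sig q k | None => None end).
  exists (map trace (seq 0 N)). intros i k Hi.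
  destruct (Nat.lt_ge_cases i N) as [H|H].
  - rewrite nth_indep with (d' := trace 0) by (rewrite length_map, length_seq; exact H).
    rewrite map_nth, seq_nth by exact H. simpl. unfold trace. rewrite Hi. reflexivity.
  - rewrite nth_overflow by (rewrite length_map, length_seq; exact H).
    destruct (proj1_sig q k) eqn:E; [|reflexivity].
    exfalso. assert (Hlt := HN i k Hi (HL k ltac:(congruence))). lia.
Qed.

End Readings.

Section NameTransport.
Variables (K : Type) (pi : K -> K).
Hypothesis pi_invol : forall k, pi (pi k) = k.
Variables (ea eb : nat -> option K).
Hypothesis ea_inj : enum_inj K ea.
Hypothesis pi_enum : forall i, eb i = option_map pi (ea i).
Variables f g : name K.
Hypothesis f_supp : forall n m q, val K f n m q <-> val K f n m (restrict K ea q).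
Hypothesis g_supp : forall n m q, val K g n m q <-> val K g n m (restrict K eb q).
Hypothesis same_readings : forall n m s,
  (exists q, reads_as K ea s q /\ val K f n m q) <-> (exists q, reads_as K eb s q /\ val K g n m q).

Lemma agrees_act s q : agrees K ea s q -> agrees K eb s (act K pi pi_invol q).
Proof.
  intros H i k Hi. simpl. rewrite pi_enum in Hi.
  destruct (ea i) as [k0|] eqn:E; [|discriminate]. injection Hi as <-.
  rewrite pi_invol. exact (H i k0 E).
Qed.

Lemma transports_name n m : transports K pi pi_invol (val K f n m) (val K g n m).
Proof.
  intros q. destruct (agrees_exists K ea q ea_inj) as [s Hs].
  pose proof (reads_as_restrict K _ _ _ Hs) as Ra.
  pose proof (reads_as_restrict K _ _ _ (agrees_act s q Hs)) as Rb.
  rewrite (f_supp n m q), (g_supp n m (act K pi pi_invol q)). split; intros H.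
  - destruct (proj1 (same_readings n m s) (ex_intro _ _ (conj Ra H))) as [q' [Rq' Hq']].
    rewrite (reads_as_unique K _ _ _ _ Rb Rq'). exact Hq'.
  - destruct (proj2 (same_readings n m s) (ex_intro _ _ (conj Rb H))) as [q' [Rq' Hq']].
    rewrite (reads_as_unique K _ _ _ _ Ra Rq'). exact Hq'.
Qed.

End NameTransport.

Definition type_index : Type := (nat * nat * list (option bool) + (nat + nat * nat))%type.

Lemma countable_type_index : countable type_index.
Proof.
  apply countable_sum; [|apply countable_sum].
  - apply countable_prod; [apply countable_prod; apply countable_nat|].
    apply countable_list, countable_option, countable_bool.
  - apply countable_nat.
  - apply countable_prod; apply countable_nat.
Qed.

(* The data of [f] relative to a support [e] that two names must share for the
   swap of their supports to carry one to the other while fixing the conditions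
   whose domain is listed in [L]. *)
Definition name_type K (f : name K) (e : nat -> option K) (L : list K) (x : type_index) : Prop :=
  match x with
  | inl (n, m, s) => exists q, reads_as K e s q /\ val K f n m q
  | inr (inl j) => e j = None
  | inr (inr (j, l)) => exists k, nth_error L l = Some k /\ e j = Some k
  end.

Lemma same_type_listed K (f g : name K) ea eb L k :
  (forall x, name_type K f ea L x <-> name_type K g eb L x) -> In k L ->
  forall j, ea j = Some k <-> eb j = Some k.
Proof.
  intros Ht Hk j. destruct (In_nth_error _ _ Hk) as [l Hl].
  split; intros E.
  - destruct (proj1 (Ht (inr (inr (j, l))))) as [k' [? ?]]; [exists k; auto | congruence].
  - destruct (proj2 (Ht (inr (inr (j, l))))) as [k' [? ?]]; [exists k; auto | congruence].
Qed.

Theorem lemma4 (K : Type) (W : Type) (lt : W -> W -> Prop) (HW : is_c_plus lt)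
  (F : W -> name K) :
  forall p : cond K, ~ (forall a b, lt a b -> val_ll K (F a) (F b) p).
Proof.
  intros p Hll.
  destruct (choice _ (fun a => name_support K (F a))) as [e He].
  destruct (proj2_sig p) as [L HL].
  destruct (delta_system W lt HW _ e _ (fun a => name_type K (F a) (e a) L)
              (le_continuum_pred_countable _ countable_type_index))
    as (a & b & Hab & Htype & Halign).
  assert (Ht : forall x, name_type K (F a) (e a) L x <-> name_type K (F b) (e b) L x)
    by (intros x; rewrite Htype; reflexivity).
  assert (Hnone : forall j, e a j = None <-> e b j = None)
    by (intros j; exact (Ht (inr (inl j)))).
  destruct (He a) as [Ia Sa], (He b) as [Ib Sb].
  pose (pi := swap K (e a) (e b)).
  pose proof (swap_invol K (e a) (e b) Ia Ib Halign Hnone) as pi_invol.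
  assert (Hp : act K pi pi_invol p = p).
  { apply act_fixed. intros k Hk. apply (swap_fixed K (e a) (e b) Ia Ib Halign Hnone).
    exact (same_type_listed K _ _ _ _ L k Ht (HL k Hk)). }
  assert (Hab_ba : forall n m, transports K pi pi_invol (val K (F a) n m) (val K (F b) n m)).
  { intros n m. apply (transports_name K pi pi_invol (e a) (e b) Ia); auto.
    - exact (swap_enum K (e a) (e b) Ia Ib Halign Hnone).
    - intros n' m' s. exact (Ht (inl (n', m', s))). }
  assert (Htr := transports_val_ll K pi pi_invol (F a) (F b) (F b) (F a) Hab_ba
                   (fun n m => transports_sym K pi pi_invol _ _ (Hab_ba n m)) p).
  rewrite Hp in Htr.
  exact (val_ll_asym K (F a) (F b) p (Hll a b Hab) (proj1 Htr (Hll a b Hab))).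
Qed.
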